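(* For positive integers $a\ge b$ and odd $k\ge3$, $$\delta_k\binom{ap}{bp}^{\mathfrak a}=-\frac{T^k}{k}\big[a^k-b^k-(a-b)^k\big]\binom{ap}{bp}^{\mathfrak a}.$$
   Context: $\mathcal M^{(1)}=\mathbb Q[\zeta^{\mathfrak a}(3),\zeta^{\mathfrak a}(5),\dots]$ is the free polynomial subalgebra of depth-one motivic MZVs in $\mathcal A=\mathcal H/\zeta^{\mathfrak m}(2)\mathcal H$; $\zeta^{\mathfrak a}(k)=0$ for even $k$. For odd $k\ge3$, $\delta_k$ is the continuous $\mathbb Q((T))$-linear derivation $\partial/\partial\zeta^{\mathfrak a}(k)$ of $\mathcal M^{(1)}((T))$. $H^{\mathfrak a}(n)=(-1)^n\sum_{j\ge1}\binom{n+j-1}{n-1}\zeta^{\mathfrak a}(n+j)T^j$; $H^{\mathfrak a}(1^0)=1$, $H^{\mathfrak a}(1^n)=\frac1n\sum_{i=1}^n(-1)^{i-1}H^{\mathfrak a}(i)H^{\mathfrak a}(1^{n-i})$; $c_n^{\mathfrak a}=n\sum_{j\ge0}(n-1)^jT^jH^{\mathfrak a}(1^j)$ for $n\ge1$; and $\binom{ap}{bp}^{\mathfrak a}=\dfrac{c^{\mathfrak a}_a\cdots c^{\mathfrak a}_{a-b+1}}{c^{\mathfrak a}_b\cdots c^{\mathfrak a}_1}$. *)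

From HB Require Import structures.
From mathcomp Require Import all_boot all_order all_algebra.
Set Implicit Arguments. Unset Strict Implicit. Unset Printing Implicit Defensive.
Import Order.TTheory GRing.Theory Num.Theory.
Local Open Scope ring_scope.

(* Formal power series in T over a commutative Q-algebra R, as coefficient
   functions: f n = coefficient of T^n. *)
Section PowerSeries.
Variable R : comUnitAlgType rat.

Definition ps := nat -> R.

Definition ps1 : ps := fun n => if n == 0%N then 1 else 0.

Definition psmul (f g : ps) : ps := fun n => \sum_(i < n.+1) f i * g (n - i)%N.

Definition psshift (k : nat) (f : ps) : ps :=
  fun n => if (k <= n)%N then f (n - k)%N else 0.

Definition psscale (c : rat) (f : ps) : ps := fun n => c *: f n.

(* coefficientwise application (continuous Q((T))-linear extension) *)
Definition psmap (d : R -> R) (f : ps) : ps := fun n => d (f n).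

(* first n+1 coefficients of the inverse of f (f 0 assumed a unit) *)
Fixpoint psinv_seq (f : ps) (n : nat) : seq R :=
  match n with
  | 0 => [:: (f 0%N)^-1]
  | n'.+1 =>
      let s := psinv_seq f n' in
      rcons s (- (f 0%N)^-1 *
               \sum_(i < n.+1 | (0 < i)%N) f i * nth 0 s (n - i)%N)
  end.

Definition psinv (f : ps) : ps := fun n => nth 0 (psinv_seq f n) n.

Definition psprod (s : seq ps) : ps := foldr psmul ps1 s.

(* z n plays the role of zeta^a(n) *)
Variable z : nat -> R.

Definition Ha (n : nat) : ps :=
  fun j => if j == 0%N then 0
           else (-1) ^+ n * ('C(n + j - 1, n - 1))%:R * z (n + j)%N.

(* [:: H^a(1^0); ...; H^a(1^n)] *)
Fixpoint H1seq (n : nat) : seq ps :=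
  match n with
  | 0 => [:: ps1]
  | n'.+1 =>
      let s := H1seq n' in
      rcons s (psscale ((n%:R : rat)^-1)
                 (fun m => \sum_(i < n.+1 | (0 < i)%N)
                             (-1) ^+ (i - 1) * psmul (Ha i) (nth ps1 s (n - i)%N) m))
  end.

Definition H1 (n : nat) : ps := nth ps1 (H1seq n) n.

Definition ca (n : nat) : ps :=
  fun m => n%:R * \sum_(j < m.+1) ((n - 1) ^ j)%:R * H1 j (m - j)%N.

Definition binoma (a b : nat) : ps :=
  psmul (psprod (map ca (iota (a - b).+1 b)))
        (psinv (psprod (map ca (iota 1 b)))).

End PowerSeries.

From HB Require Import structures.
From mathcomp Require Import all_boot all_order all_algebra.
From mathcomp Require Import boolp.
From mathcomp Require Import ring zify.
Set Implicit Arguments.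
Unset Strict Implicit.
Unset Printing Implicit Defensive.
Import GRing.Theory Num.Theory.
Local Open Scope ring_scope.

(* The coefficientwise extension D of d is a derivation of the power series
   ring.  Since d (z m) only detects m = k, each D H(i) is a single monomial:
   (-1)^(i-1) D H(i) = i beta_i with beta_i = -(1/k) C(k,i) T^(k-i), using
   i C(k,i) = k C(k-1,i-1).  Differentiating Newton's identity
     j H(1^j) = sum_(0<i<=j) (-1)^(i-1) H(i) H(1^(j-i))
   gives, by strong induction on j, D H(1^j) = sum_(0<i<k) beta_i H(1^(j-i)).
   Substituted into c_n = n sum_j (n-1)^j T^j H(1^j), this makes c_n an
   eigenvector, D c_n = lambda_n T^k c_n, where the binomial theorem gives
   lambda_n = -(n^k - 1 - (n-1)^k)/k.  The logarithmic derivative of the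
   quotient defining the binomial is therefore
   sum_(a-b<n<=a) lambda_n - sum_(0<n<=b) lambda_n, which telescopes to
   -(a^k - b^k - (a-b)^k)/k. *)

Section PowerSeriesRing.
Variable R : comUnitAlgType rat.
Local Notation fps := (ps R).

HB.instance Definition _ := gen_eqMixin fps.
HB.instance Definition _ := gen_choiceMixin fps.

Definition psadd (f g : fps) : fps := fun n => f n + g n.
Definition psopp (f : fps) : fps := fun n => - f n.
Definition ps0 : fps := fun _ => 0.

Fact psaddA : associative psadd.
Proof. by move=> f g h; apply: funext => n; rewrite /psadd addrA. Qed.
Fact psaddC : commutative psadd.
Proof. by move=> f g; apply: funext => n; rewrite /psadd addrC. Qed.
Fact psadd0 : left_id ps0 psadd.
Proof. by move=> f; apply: funext => n; rewrite /psadd add0r. Qed.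
Fact psaddN : left_inverse ps0 psopp psadd.
Proof. by move=> f; apply: funext => n; rewrite /psadd /psopp addNr. Qed.
HB.instance Definition _ := GRing.isZmodule.Build fps psaddA psaddC psadd0 psaddN.

Lemma psmul_revE (f g : fps) n : psmul f g n = \sum_(j < n.+1) f (n - j)%N * g j.
Proof.
rewrite /psmul (reindex_inj rev_ord_inj) /=; apply: eq_bigr => j _.
by rewrite subKn // -ltnS.
Qed.

Fact psmulA : associative (@psmul R).
Proof.
move=> p q r; apply: funext => i; rewrite [in RHS]psmul_revE.
change (\sum_(j < i.+1) p j * psmul q r (i - j)%N
        = \sum_(j < i.+1) psmul p q (i - j)%N * r j).
pose coef3 j l := p j * (q (i - j - l)%N * r l).
transitivity (\sum_(j < i.+1) \sum_(l < i.+1 | (l <= i - j)%N) coef3 j l).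
  apply: eq_bigr => /= j _; rewrite psmul_revE big_distrr /=.
  by rewrite (big_ord_narrow_leq (leq_subr _ _)).
rewrite (exchange_big_dep predT) //=; apply: eq_bigr => l _.
transitivity (\sum_(j < i.+1 | (j <= i - l)%N) coef3 j l).
  apply: eq_bigl => j; rewrite -ltnS -(ltnS j) -!subSn ?leq_ord //.
  by rewrite -subn_gt0 -(subn_gt0 j) -!subnDA addnC.
rewrite (big_ord_narrow_leq (leq_subr _ _)) [psmul p q _]/psmul big_distrl /=.
by apply: eq_bigr => j _; rewrite /coef3 -!subnDA addnC mulrA.
Qed.

Fact psmulC : commutative (@psmul R).
Proof.
move=> f g; apply: funext => n; rewrite psmul_revE /psmul.
by apply: eq_bigr => j _; rewrite mulrC.
Qed.

Fact psmul1 : left_id (ps1 R) (@psmul R).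
Proof.
move=> f; apply: funext => n; rewrite /psmul big_ord_recl /= /ps1 /=.
by rewrite mul1r subn0 big1 ?addr0 // => i _; rewrite mul0r.
Qed.

Fact psmulDl : left_distributive (@psmul R) (+%R : fps -> fps -> fps).
Proof.
move=> f g h; apply: funext => n; rewrite /psmul.
change (\sum_(i < n.+1) (f i + g i) * h (n - i)%N
        = \sum_(i < n.+1) f i * h (n - i)%N + \sum_(i < n.+1) g i * h (n - i)%N).
by rewrite -big_split /=; apply: eq_bigr => i _; rewrite mulrDl.
Qed.

Fact ps1_neq0 : (ps1 R : fps) != 0.
Proof. by apply/eqP => /(congr1 (fun f : fps => f 0%N)) /eqP; rewrite oner_eq0. Qed.

HB.instance Definition _ :=
  GRing.Zmodule_isComNzRing.Build fps psmulA psmulC psmul1 psmulDl ps1_neq0.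

Lemma ps_mulE (f g : fps) : f * g = psmul f g. Proof. by []. Qed.
Lemma ps_addE (f g : fps) n : (f + g) n = f n + g n. Proof. by []. Qed.
Lemma ps_oppE (f : fps) n : (- f) n = - f n. Proof. by []. Qed.

Lemma ps_sumE I (r : seq I) (P : pred I) (F : I -> fps) m :
  (\sum_(i <- r | P i) F i) m = \sum_(i <- r | P i) F i m.
Proof. exact: (big_morph (fun f : fps => f m)). Qed.

Lemma ps_prod0E I (r : seq I) (F : I -> fps) :
  (\prod_(i <- r) F i) 0%N = \prod_(i <- r) F i 0%N.
Proof.
elim: r => [|x r IH]; first by rewrite !big_nil.
by rewrite !big_cons ps_mulE /psmul big_ord1 IH.
Qed.

Definition psC (r : R) : fps := fun n => if n == 0%N then r else 0.

Lemma psC_mulE r (f : fps) m : (psC r * f) m = r * f m.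
Proof.
rewrite ps_mulE /psmul big_ord_recl /= subn0 big1 ?addr0 // => i _.
by rewrite /psC /= mul0r.
Qed.

Lemma psCM r s : psC (r * s) = psC r * psC s.
Proof. by apply: funext => m; rewrite psC_mulE /psC; case: (m == 0%N); rewrite ?mulr0. Qed.
Lemma psCD r s : psC (r + s) = psC r + psC s.
Proof. by apply: funext => m; rewrite ps_addE /psC; case: (m == 0%N); rewrite ?addr0. Qed.
Lemma psCN r : psC (- r) = - psC r.
Proof. by apply: funext => m; rewrite ps_oppE /psC; case: (m == 0%N); rewrite ?oppr0. Qed.
Lemma psC0 : psC 0 = 0.
Proof. by apply: funext => m; rewrite /psC; case: (m == 0%N). Qed.
Lemma psC_nat n : psC n%:R = n%:R.
Proof. by elim: n => [|n IH]; rewrite ?psC0 // -addn1 !natrD psCD IH. Qed.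
Lemma psC_sum I (r : seq I) (P : pred I) (F : I -> R) :
  psC (\sum_(i <- r | P i) F i) = \sum_(i <- r | P i) psC (F i).
Proof. exact: (big_morph psC psCD psC0). Qed.

Definition psXn (j : nat) : fps := psshift j (ps1 R).

Lemma psXnE j m : psXn j m = if m == j then 1 else 0.
Proof.
rewrite /psXn /psshift /ps1; case: (ltngtP m j) => h //.
- by rewrite subn_eq0 leqNgt h.
- by rewrite h subnn.
Qed.

Lemma psXn_mulE j (f : fps) m :
  (psXn j * f) m = if (j <= m)%N then f (m - j)%N else 0.
Proof.
rewrite ps_mulE /psmul; case: ifP => hj.
- have hj' : (j < m.+1)%N by [].
  rewrite (bigD1 (Ordinal hj')) //= psXnE eqxx mul1r big1 ?addr0 // => i hi.
  rewrite psXnE; case: eqP => [e|]; last by rewrite mul0r.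
  by move: hi; rewrite -val_eqE /= e eqxx.
- rewrite big1 // => i _; rewrite psXnE; case: eqP => [e|]; last by rewrite mul0r.
  by move: (ltn_ord i); rewrite e ltnS hj.
Qed.

Lemma psshift_mulXn j (f : fps) : psshift j f = psXn j * f.
Proof. by apply: funext => m; rewrite psXn_mulE. Qed.

Lemma psXnD i j : psXn (i + j) = psXn i * psXn j.
Proof.
apply: funext => m; rewrite psXn_mulE !psXnE; case: (leqP i m) => h.
- by have -> : (m == i + j)%N = (m - i == j)%N by apply/eqP/eqP; lia.
- by have -> : (m == i + j)%N = false by apply/eqP; lia.
Qed.

Lemma psscale_mulC c (f : fps) : psscale c f = psC c%:A * f.
Proof. by apply: funext => m; rewrite psC_mulE /psscale mulr_algl. Qed.

Lemma psprod_big (s : seq fps) : psprod s = \prod_(f <- s) f.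
Proof. by elim: s => [|f s IH]; rewrite ?big_nil // big_cons /= -IH. Qed.

Lemma size_psinv_seq (f : fps) n : size (psinv_seq f n) = n.+1.
Proof. by elim: n => [|n IH] //=; rewrite size_rcons IH. Qed.

Lemma nth_psinv_seq (f : fps) n i :
  (i <= n)%N -> nth 0 (psinv_seq f n) i = psinv f i.
Proof.
elim: n => [|n IH]; first by rewrite leqn0 => /eqP ->.
rewrite leq_eqVlt => /orP [/eqP -> //| hi].
by rewrite /= nth_rcons size_psinv_seq hi IH.
Qed.

Lemma psinvS (f : fps) n : psinv f n.+1 =
  - (f 0%N)^-1 * \sum_(i < n.+2 | (0 < i)%N) f i * psinv f (n.+1 - i)%N.
Proof.
rewrite /psinv /= nth_rcons size_psinv_seq ltnn eqxx; congr (_ * _).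
apply: eq_bigr => i hi; rewrite nth_psinv_seq //.
by move: hi; case: i => [[|i]] //= _ _; rewrite subSS leq_subr.
Qed.

Lemma mul_psinv (f : fps) : f 0%N \is a GRing.unit -> f * psinv f = 1.
Proof.
move=> hu; apply: funext => -[|m]; rewrite ps_mulE /psmul.
  by rewrite big_ord1 /= /psinv /= mulrV.
rewrite big_ord_recl /= subn0 psinvS mulrA mulrN mulrV // mulN1r.
rewrite (big_mkcond (fun i : 'I_m.+2 => (0 < i)%N)) big_ord_recl /= add0r.
by rewrite addNr.
Qed.

Lemma natr_alg n : (n%:R : R) = (n%:R : rat)%:A.
Proof. by rewrite scaler_nat. Qed.

Lemma unitr_nat n : (0 < n)%N -> (n%:R : R) \is a GRing.unit.
Proof.
move=> hn; apply/unitrP; exists (n%:R^-1 : rat)%:A; rewrite natr_alg.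
have hn0 : (n%:R : rat) != 0 by rewrite pnatr_eq0 -lt0n.
by split; rewrite mulr_algl scalerA ?mulVf ?mulfV // scale1r.
Qed.

Lemma psC_invn_mulr n : (0 < n)%N -> psC ((n%:R : rat)^-1)%:A * n%:R = 1.
Proof.
move=> hn; rewrite -psC_nat -psCM natr_alg mulr_algl scalerA mulVf ?scale1r //.
by rewrite pnatr_eq0 -lt0n.
Qed.

Lemma sum_ord_subn (V : nmodType) (f : nat -> V) i m : (i <= m)%N ->
  \sum_(j < m.+1) (if (i <= j)%N then f (j - i)%N else 0) = \sum_(l < (m - i).+1) f l.
Proof.
move=> him; rewrite -(big_mkord xpredT (fun j => if (i <= j)%N then f (j - i)%N else 0)).
rewrite -(big_mkord xpredT f) (@big_cat_nat _ _ _ i) //=; last lia.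
rewrite big1_seq ?add0r; last first.
  by move=> j /andP[_]; rewrite mem_index_iota => /andP[_ h]; rewrite leqNgt h.
rewrite -{1}[i]add0n big_addn subSn //; apply: eq_big_nat => l _.
by rewrite leq_addl addnK.
Qed.

Lemma exchange_sum_triangle (V : nmodType) (G : nat -> nat -> V) j :
  \sum_(i < j.+1 | (0 < i)%N) \sum_(l < (j - i).+1 | (0 < l)%N) G i l =
  \sum_(l < j.+1 | (0 < l)%N) \sum_(i < (j - l).+1 | (0 < i)%N) G i l.
Proof.
have mk (H : nat -> nat -> V) :
    \sum_(i < j.+1 | (0 < i)%N) \sum_(l < (j - i).+1 | (0 < l)%N) H i l =
    \sum_(i < j.+1) \sum_(l < j.+1)
      (if [&& (0 < i)%N, (0 < l)%N & (i + l <= j)%N] then H i l else 0).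
  rewrite big_mkcond; apply: eq_bigr => i _.
  case: (posnP i) => [->|hi] /=; first by rewrite big1.
  have hij : (i <= j)%N by rewrite -ltnS.
  rewrite big_mkcond (big_ord_widen j.+1 (fun l => if (0 < l)%N then H i l else 0)); last first.
    by rewrite ltnS leq_subr.
  rewrite big_mkcond; apply: eq_bigr => l _.
  rewrite ltnS leq_subRL //.
  by case: (0 < l)%N; case: (i + l <= j)%N.
rewrite mk (mk (fun l i => G i l)) exchange_big /=.
apply: eq_bigr => l _; apply: eq_bigr => i _.
by rewrite addnC; case: (0 < i)%N; case: (0 < l)%N.
Qed.

Lemma sum_binomial_middle (S : comPzRingType) (x : S) n : (0 < n)%N ->
  \sum_(i < n | (0 < i)%N) x ^+ i *+ 'C(n, i) = (x + 1) ^+ n - 1 - x ^+ n.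
Proof.
case: n => [|n] // _; rewrite exprD1n big_ord_recr /= binn mulr1n.
rewrite big_ord_recl /= bin0 mulr1n expr0.
rewrite (big_mkcond (fun i : 'I_n.+1 => (0 < i)%N)) big_ord_recl /= add0r.
by ring.
Qed.

(* The sum of a family whose orders tend to infinity ([F j q = 0] for [q < j]),
   computed coefficientwise. *)
Definition pssum (F : nat -> fps) : fps := fun m => \sum_(j < m.+1) F j m.

Section SummableFamily.
Variable F : nat -> fps.
Hypothesis F_order : forall j q, (q < j)%N -> F j q = 0.

Lemma pssum_trunc M q : (q <= M)%N -> pssum F q = (\sum_(j < M.+1) F j) q.
Proof.
move=> hqM; rewrite ps_sumE /pssum (big_ord_widen M.+1 (F^~ q)) // big_mkcond.
by apply: eq_bigr => j _; case: ltnP => // hj; rewrite F_order.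
Qed.

Lemma pssum_conv (P : pred nat) (K : nat) (G : nat -> fps) :
    (forall i q, (q < i)%N -> G i q = 0) ->
  pssum (fun j => \sum_(i < K | P i) (if (i <= j)%N then G i * F (j - i) else 0))
  = (\sum_(i < K | P i) G i) * pssum F.
Proof.
move=> G_order; apply: funext => m.
rewrite /pssum mulr_suml !ps_sumE.
under eq_bigr => j _ do rewrite ps_sumE.
rewrite exchange_big /=; apply: eq_bigr => i _.
have -> : \sum_(j < m.+1) (if (i <= j)%N then G i * F (j - i) else 0) m
          = (G i * \sum_(j < m.+1) (if (i <= j)%N then F (j - i) else 0)) m.
  rewrite mulr_sumr ps_sumE; apply: eq_bigr => j _; case: ifP => //.
  by rewrite mulr0.
rewrite !ps_mulE /psmul; apply: eq_bigr => p _.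
case: (ltnP p i) => hpi; first by rewrite G_order // !mul0r.
have him : (i <= m)%N by move: (ltn_ord p); lia.
by rewrite sum_ord_subn // -(pssum_trunc (M := m - i)) //; lia.
Qed.
End SummableFamily.

Section Newton.
Variable z : nat -> R.

Lemma size_H1seq n : size (H1seq z n) = n.+1.
Proof. by elim: n => [|n IH] //=; rewrite size_rcons IH. Qed.

Lemma nth_H1seq n i : (i <= n)%N -> nth (ps1 R) (H1seq z n) i = H1 z i.
Proof.
elim: n => [|n IH]; first by rewrite leqn0 => /eqP ->.
rewrite leq_eqVlt => /orP [/eqP -> //| hi].
by rewrite /= nth_rcons size_H1seq hi IH.
Qed.

Lemma H1_Newton j : j%:R * H1 z j =
  \sum_(i < j.+1 | (0 < i)%N) psC ((-1) ^+ (i - 1)) * (Ha z i * H1 z (j - i)).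
Proof.
case: j => [|j]; first by rewrite mul0r big1 // => -[[|i] hi].
rewrite /H1 /= nth_rcons size_H1seq ltnn eqxx psscale_mulC mulrA.
rewrite -psC_nat -psCM natr_alg mulr_algl scalerA mulfV ?pnatr_eq0 // scale1r mul1r.
apply: funext => m; rewrite ps_sumE; apply: eq_bigr => i hi.
rewrite psC_mulE nth_H1seq //.
by move: hi; case: i => [[|i]] //= _ _; rewrite subSS leq_subr.
Qed.

Definition ca_term (n j : nat) : fps := psC ((n - 1) ^ j)%:R * (psXn j * H1 z j).

Lemma ca_term_order n j q : (q < j)%N -> ca_term n j q = 0.
Proof. by move=> hqj; rewrite /ca_term psC_mulE psXn_mulE leqNgt hqj mulr0. Qed.

Lemma ca0E n : ca z n 0%N = n%:R.
Proof. by rewrite /ca big_ord1 /= mul1r mulr1. Qed.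

Lemma ca_pssum n : ca z n = psC n%:R * pssum (ca_term n).
Proof.
apply: funext => q; rewrite psC_mulE /ca /pssum; congr (_ * _).
by apply: eq_bigr => j _; rewrite /ca_term psC_mulE psXn_mulE -ltnS ltn_ord.
Qed.

End Newton.

Section Derivation.
Variable d : R -> R.
Hypothesis hdD : forall x y : R, d (x + y) = d x + d y.
Hypothesis hdM : forall x y : R, d (x * y) = d x * y + x * d y.

Lemma der0 : d 0 = 0.
Proof. by apply: (addrI (d 0)); rewrite -hdD !addr0. Qed.
Lemma der1 : d 1 = 0.
Proof. by apply: (addrI (d 1)); have := hdM 1 1; rewrite !mulr1 mul1r addr0 => <-. Qed.
Lemma derN x : d (- x) = - d x.
Proof. by apply: (addrI (d x)); rewrite -hdD !subrr der0. Qed.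
Lemma der_nat n : d n%:R = 0.
Proof. by elim: n => [|n IH]; rewrite ?der0 // -addn1 natrD hdD IH der1 addr0. Qed.
Lemma der_sign n : d ((-1) ^+ n) = 0.
Proof. by elim: n => [|n IH]; rewrite ?der1 // exprS hdM IH derN der1 oppr0 mul0r mulr0 addr0. Qed.
Lemma der_mull c x : d c = 0 -> d (c * x) = c * d x.
Proof. by move=> h; rewrite hdM h mul0r add0r. Qed.
Lemma der_sum I (r : seq I) (P : pred I) (F : I -> R) :
  d (\sum_(i <- r | P i) F i) = \sum_(i <- r | P i) d (F i).
Proof. exact: (big_morph d hdD der0). Qed.

Local Notation D := (psmap d).

Lemma psmapD (f g : fps) : D (f + g) = D f + D g.
Proof. by apply: funext => m; rewrite /psmap !ps_addE hdD. Qed.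
Lemma psmap0 : D 0 = 0.
Proof. by apply: funext => m; rewrite /psmap der0. Qed.
Lemma psmapM (f g : fps) : D (f * g) = D f * g + f * D g.
Proof.
apply: funext => m; rewrite /psmap ps_addE !ps_mulE /psmul der_sum -big_split /=.
by apply: eq_bigr => i _; rewrite hdM.
Qed.
Lemma psmap_sum I (r : seq I) (P : pred I) (F : I -> fps) :
  D (\sum_(i <- r | P i) F i) = \sum_(i <- r | P i) D (F i).
Proof. exact: (big_morph D psmapD psmap0). Qed.
Lemma psmapC r : D (psC r) = psC (d r).
Proof. by apply: funext => m; rewrite /psmap /psC; case: (m == 0%N); rewrite ?der0. Qed.
Lemma psmap1 : D 1 = 0.
Proof. by rewrite -[1]/(psC 1) psmapC der1 psC0. Qed.
Lemma psmapXn j : D (psXn j) = 0.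
Proof. by apply: funext => m; rewrite /psmap psXnE; case: (m == j); rewrite ?der1 ?der0. Qed.
Lemma psmapC_mull c (f : fps) : d c = 0 -> D (psC c * f) = psC c * D f.
Proof. by move=> h; rewrite psmapM psmapC h psC0 mul0r add0r. Qed.
Lemma psmap_pssum (F : nat -> fps) : D (pssum F) = pssum (fun j => D (F j)).
Proof. by apply: funext => m; rewrite /psmap /pssum der_sum. Qed.

Lemma psmap_prod (I : eqType) (r : seq I) (F e : I -> fps) :
    (forall i, i \in r -> D (F i) = e i * F i) ->
  D (\prod_(i <- r) F i) = (\sum_(i <- r) e i) * \prod_(i <- r) F i.
Proof.
elim: r => [|x r IH] h; first by rewrite !big_nil psmap1 mul0r.
rewrite !big_cons psmapM h ?mem_head // IH; first ring.
by move=> i hi; apply: h; rewrite in_cons hi orbT.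
Qed.

Lemma psmap_inv (f g e : fps) : f * g = 1 -> D f = e * f -> D g = - e * g.
Proof.
move=> hfg hf; have : g * D (f * g) = 0 by rewrite hfg psmap1 mulr0.
rewrite psmapM hf.
have -> : g * (e * f * g + f * D g) = (f * g) * (e * g + D g) by ring.
by rewrite hfg mul1r => /eqP; rewrite addrC addr_eq0 => /eqP ->; ring.
Qed.

Lemma psmap_mul_inv (f g h ef eg : fps) : g * h = 1 ->
  D f = ef * f -> D g = eg * g -> D (f * h) = (ef - eg) * (f * h).
Proof. by move=> hgh hf hg; rewrite psmapM hf (psmap_inv hgh hg); ring. Qed.

Section DeltaK.
Variable z : nat -> R.
Variable k : nat.
Hypothesis hz_even : forall n, ~~ odd n -> z n = 0.
Hypothesis hdz : forall m, odd m -> (3 <= m)%N -> d (z m) = if m == k then 1 else 0.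
Hypothesis hk : odd k.

Lemma k_gt0 : (0 < k)%N.
Proof. by case: k hk. Qed.

Lemma der_z m : (2 <= m)%N -> d (z m) = if m == k then 1 else 0.
Proof.
move=> hm; case ho: (odd m).
  by apply: hdz => //; move: hm ho; rewrite leq_eqVlt => /orP [/eqP <-|].
rewrite hz_even ?ho // der0; case: eqP => // e.
by move: hk; rewrite -e ho.
Qed.

Lemma psmap_Ha i : (0 < i)%N -> D (Ha z i) =
  if (i < k)%N then psC ((-1) ^+ i * ('C(k.-1, i.-1))%:R) * psXn (k - i) else 0.
Proof.
move=> hi; apply: funext => m; rewrite /psmap /Ha.
case: (m =P 0%N) => [->|hm] /=.
  rewrite der0; case: ifP => // hik; rewrite psC_mulE psXnE.
  by rewrite (_ : (0 == k - i)%N = false) ?mulr0 //; apply/eqP; lia.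
rewrite !der_mull ?der_z; [|lia|by rewrite der_nat mulr0|exact: der_sign].
case: (ltnP i k) => hik.
  rewrite psC_mulE psXnE.
  have -> : (i + m == k)%N = (m == k - i)%N by apply/eqP/eqP; lia.
  case: eqP => [e|]; last by rewrite !mulr0.
  by rewrite !mulr1; congr (_ * _%:R); congr binomial; lia.
by case: eqP => [e|]; [lia | rewrite mulr0].
Qed.

Definition dH1_coef (i : nat) : fps :=
  if (i < k)%N then psC (- ((k%:R : rat)^-1 * 'C(k, i)%:R))%:A * psXn (k - i) else 0.

Lemma psmap_Ha_sign i : (0 < i)%N ->
  psC ((-1) ^+ (i - 1)) * D (Ha z i) = i%:R * dH1_coef i.
Proof.
move=> hi; rewrite psmap_Ha // /dH1_coef; case: ifP => hik; last by rewrite !mulr0.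
rewrite mulrA -psCM -psC_nat mulrA -psCM; congr (psC _ * _).
case: i hi hik => [|i] // _ hik.
have sg : ((-1) ^+ i * (-1) ^+ i : R) = 1.
  by rewrite -exprD addnn -mul2n exprM sqrrN !expr1n.
rewrite subn1 /= mulrA exprS mulrCA sg mulr1 mulN1r natr_alg mulr_algl scalerA mulrN.
have hk0 : (k%:R : rat) != 0 by rewrite pnatr_eq0 -lt0n k_gt0.
have -> : ((i.+1)%:R * ((k%:R)^-1 * 'C(k, i.+1)%:R) : rat) = 'C(k.-1, i)%:R.
  by rewrite mulrCA -natrM -mul_bin_diag natrM mulKf.
by rewrite scaleNr scaler_nat.
Qed.

Lemma psmap_H1 j : D (H1 z j) = \sum_(i < j.+1 | (0 < i)%N) dH1_coef i * H1 z (j - i).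
Proof.
elim/ltn_ind: j => -[|j] IH.
  by rewrite [H1 z 0]/= psmap1 big1 // => -[[|i] hi].
set s := fun i => psC ((-1) ^+ (i - 1)) : fps.
have hD_summand (i : 'I_j.+2) : (0 < i)%N ->
    D (s i * (Ha z i * H1 z (j.+1 - i))) =
    i%:R * dH1_coef i * H1 z (j.+1 - i) + s i * (Ha z i * D (H1 z (j.+1 - i))).
  by move=> hi; rewrite psmapC_mull ?der_sign // psmapM mulrDr mulrA psmap_Ha_sign.
have hcross : \sum_(i < j.+2 | (0 < i)%N) s i * (Ha z i * D (H1 z (j.+1 - i))) =
    \sum_(l < j.+2 | (0 < l)%N) dH1_coef l * ((j.+1 - l)%:R * H1 z (j.+1 - l)).
  transitivity (\sum_(i < j.+2 | (0 < i)%N) \sum_(l < (j.+1 - i).+1 | (0 < l)%N)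
      (s i * Ha z i) * (dH1_coef l * H1 z (j.+1 - i - l))).
    apply: eq_bigr => i hi; rewrite IH; last by move: (ltn_ord i); lia.
    by rewrite mulrA mulr_sumr.
  rewrite (@exchange_sum_triangle _
    (fun i l => (s i * Ha z i) * (dH1_coef l * H1 z (j.+1 - i - l)))).
  apply: eq_bigr => l hl.
  rewrite H1_Newton mulr_sumr; apply: eq_bigr => i hi.
  by rewrite subnAC mulrCA -mulrA.
have key : j.+1%:R * D (H1 z j.+1) =
    j.+1%:R * \sum_(i < j.+2 | (0 < i)%N) dH1_coef i * H1 z (j.+1 - i).
  rewrite -psC_nat -psmapC_mull ?der_nat // psC_nat H1_Newton psmap_sum.
  rewrite (eq_bigr _ hD_summand) big_split /= hcross -big_split mulr_sumr.
  apply: eq_bigr => i hi.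
  have -> : (j.+1%:R : fps) = i%:R + (j.+1 - i)%:R by rewrite -natrD subnKC // -ltnS.
  by rewrite mulrDl -[i%:R * _ * _]mulrA [X in _ = _ + X]mulrCA.
have := congr1 (fun f => psC ((j.+1%:R : rat)^-1)%:A * f) key.
by rewrite /= !mulrA psC_invn_mulr // !mul1r.
Qed.

Definition dca_coef (n i : nat) : fps :=
  psC ((n - 1) ^ i)%:R * (psXn i * dH1_coef i).

Lemma dca_coef_order n i q : (q < i)%N -> dca_coef n i q = 0.
Proof. by move=> hqi; rewrite /dca_coef psC_mulE psXn_mulE leqNgt hqi mulr0. Qed.

Lemma psmap_ca_term n j : D (ca_term z n j) =
  \sum_(i < k | (0 < i)%N) (if (i <= j)%N then dca_coef n i * ca_term z n (j - i) else 0).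
Proof.
rewrite /ca_term psmapC_mull ?der_nat // psmapM psmapXn mul0r add0r psmap_H1.
set c := psC _; rewrite mulr_sumr mulr_sumr.
rewrite (big_ord_widen_cond (j + k).+1 (fun i => 0 < i)%N
  (fun i => c * (psXn j * (dH1_coef i * H1 z (j - i))))) ?ltnS ?leq_addr //.
rewrite (big_ord_widen_cond (j + k).+1 (fun i => 0 < i)%N
  (fun i => if (i <= j)%N then dca_coef n i * ca_term z n (j - i) else 0));
  last by rewrite ltnW // ltnS leq_addl.
rewrite [LHS]big_mkcond [RHS]big_mkcond /=.
apply: eq_bigr => i _; rewrite ltnS.
case: (posnP i) => [->|hi] //=; case: (leqP i j) => hij /=; last by case: ltnP.
case: (ltnP i k) => hik /=; last by rewrite /dH1_coef ltnNge hik /= mul0r !mulr0.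
have hj : j = (i + (j - i))%N by rewrite subnKC.
rewrite /c /dca_coef /ca_term {1 2}hj psXnD expnD natrM psCM.
ring.
Qed.

Lemma psmap_ca n : D (ca z n) = (\sum_(i < k | (0 < i)%N) dca_coef n i) * ca z n.
Proof.
rewrite ca_pssum psmapC_mull ?der_nat // psmap_pssum mulrCA.
congr (_ * _); under eq_fun do rewrite psmap_ca_term.
by apply: pssum_conv; [exact: ca_term_order | exact: dca_coef_order].
Qed.

Definition ca_logder (n : nat) : rat :=
  - ((k%:R)^-1 * (n%:R ^+ k - 1 - (n - 1)%:R ^+ k)).

Lemma sum_dca_coef n : (0 < n)%N ->
  \sum_(i < k | (0 < i)%N) dca_coef n i = psC (ca_logder n)%:A * psXn k.
Proof.
move=> hn; have dca_coefE (i : 'I_k) : dca_coef n i =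
    psC (((n - 1) ^ i)%:R * (- ((k%:R : rat)^-1 * 'C(k, i)%:R))%:A) * psXn k.
  rewrite /dca_coef /dH1_coef ltn_ord psCM [psXn k](_ : _ = psXn i * psXn (k - i)).
    by ring.
  by rewrite -psXnD subnKC // ltnW.
under eq_bigr => i _ do rewrite dca_coefE.
rewrite -mulr_suml -psC_sum; congr (psC _ * _).
rewrite /ca_logder (_ : (n%:R : rat) = (n - 1)%:R + 1); last first.
  by rewrite natr1 subn1 prednK.
rewrite -sum_binomial_middle ?k_gt0 // mulr_sumr -sumrN scaler_suml.
apply: eq_bigr => i _; rewrite natr_alg mulr_algl scalerA natrX -mulr_natr.
by congr (_ *: 1); ring.
Qed.

Lemma psmap_ca_eigen n : (0 < n)%N ->
  D (ca z n) = psC (ca_logder n)%:A * psXn k * ca z n.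
Proof. by move=> hn; rewrite psmap_ca sum_dca_coef. Qed.

Lemma sum_ca_logder m b : \sum_(n <- iota m.+1 b) ca_logder n =
  - ((k%:R)^-1 * ((m + b)%:R ^+ k - m%:R ^+ k - b%:R)).
Proof.
elim: b m => [|b IH] m; first by rewrite big_nil addn0 subrr sub0r oppr0 mulr0 oppr0.
by rewrite /= big_cons IH /ca_logder subn1 /= addSnnS -natr1; ring.
Qed.

Lemma psmap_prod_ca m b : D (\prod_(n <- iota m.+1 b) ca z n) =
  psC (\sum_(n <- iota m.+1 b) ca_logder n)%:A * psXn k * \prod_(n <- iota m.+1 b) ca z n.
Proof.
rewrite (@psmap_prod _ _ (ca z) (fun n => psC (ca_logder n)%:A * psXn k)).
  by rewrite -mulr_suml -psC_sum scaler_suml.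
by move=> n; rewrite mem_iota => /andP[hn _]; apply: psmap_ca_eigen; lia.
Qed.

End DeltaK.
End Derivation.
End PowerSeriesRing.

Theorem mainTheorem10 (R : comUnitAlgType rat) (z : nat -> R) (d : R -> R)
    (k a b : nat)
    (hz_even : forall n, ~~ odd n -> z n = 0)
    (hdD : forall x y : R, d (x + y) = d x + d y)
    (hdZ : forall (c : rat) (x : R), d (c *: x) = c *: d x)
    (hdM : forall x y : R, d (x * y) = d x * y + x * d y)
    (hdz : forall m, odd m -> (3 <= m)%N -> d (z m) = if m == k then 1 else 0)
    (hk : odd k) (hk3 : (3 <= k)%N) (hb : (0 < b)%N) (hba : (b <= a)%N) :
  psmap d (binoma z a b)
  = psscale (- (k%:R : rat)^-1 *
               ((a%:R : rat) ^+ k - (b%:R : rat) ^+ k - ((a - b)%N%:R : rat) ^+ k))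
            (psshift k (binoma z a b)).
Proof.
have hQ : \prod_(n <- iota 0.+1 b) ca z n * psinv (\prod_(n <- iota 0.+1 b) ca z n) = 1.
  apply: mul_psinv; rewrite ps_prod0E; apply/unitr_prod_in => n.
  by rewrite mem_iota ca0E => /andP[hn _] _; apply: unitr_nat.
rewrite /binoma !psprod_big !big_map psscale_mulC psshift_mulXn.
have dprod := psmap_prod_ca hdD hdM hz_even hdz hk.
rewrite (psmap_mul_inv hdD hdM hQ (dprod _ _) (dprod _ _)) !sum_ca_logder subnK // add0n.
rewrite expr0n gtn_eqF ?k_gt0 // -mulrBl -psCN -psCD -scalerBl mulrA.
rewrite -[psmul _ _]ps_mulE !mulrA; congr (psC _ * _ * _ * _); congr (_ *: 1).
by rewrite /= subr0; ring.
Qed.
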